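(* Let $n\geq 2$ and let $\mathcal{G}=(\mathcal{V},\mathcal{E})$ be a directed graph on $\mathcal{V}=\{1,\ldots,n\}$ in which every node has at least one outgoing edge, with hyperlink matrix $A$, let $m\in(0,1)$, let $x^*$ be the PageRank vector, and let $Q=(1-m)A$. Let $\mathcal{V}_1,\ldots,\mathcal{V}_N$ ($1\leq N\leq n$) be a partition of $\mathcal{V}$ into nonempty groups of consecutive indices, $\mathcal{V}_1=\{1,\ldots,l_1\}$, $\mathcal{V}_2=\{l_1+1,\ldots,l_1+l_2\}$, $\ldots$, $\mathcal{V}_N=\{n-l_N+1,\ldots,n\}$, and partition $Q$ into blocks $\check{Q}_{hg}\in\mathbb{R}^{l_h\times l_g}$ accordingly; likewise write $x(k)=(\check{x}_1(k)^T,\ldots,\check{x}_N(k)^T)^T$ and $z(k)=(\check{z}_1(k)^T,\ldots,\check{z}_N(k)^T)^T$ with $\check{x}_h(k),\check{z}_h(k)\in\mathbb{R}^{l_h}$. Let $\{\psi(k)\}_{k\geq 0}$ be any sequence in $\{1,\ldots,N\}$. Consider the algorithm with $\check{x}_h(0)=\check{z}_h(0)=\frac{m}{n}\mathbf{1}_{l_h}$ for all $h$, and for $k\geq 0$ and each $h$, $$\check{x}_h(k+1)=\check{x}_h(k)+\check{Q}_{h\psi(k)}\big(I-\check{Q}_{\psi(k)\psi(k)}\big)^{-1}\check{z}_{\psi(k)}(k),$$ $$\check{z}_h(k+1)=\begin{cases}0&\text{if } h=\psi(k),\\ \check{z}_h(k)+\check{Q}_{h\psi(k)}\big(I-\check{Q}_{\psi(k)\psi(k)}\big)^{-1}\check{z}_{\psi(k)}(k)&\text{otherwise.}\end{cases}$$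 Then $x(k)\leq x(k+1)\leq x^*$ for all $k\geq 0$.
   Context: Write $(i,j)\in\mathcal{E}$ if page $i$ has a link to page $j$. $\mathcal{L}_j^{\text{out}}=\{i:(j,i)\in\mathcal{E}\}$ and $n_j=|\mathcal{L}_j^{\text{out}}|\geq 1$. The hyperlink matrix $A=(a_{ij})$ is defined by $a_{ij}=1/n_j$ if $i\in\mathcal{L}_j^{\text{out}}$ and $a_{ij}=0$ otherwise (column stochastic). The PageRank vector $x^*$ satisfies $x^*=(1-m)Ax^*+\frac{m}{n}\mathbf{1}_n$ and $\mathbf{1}_n^Tx^*=1$. Each diagonal block $\check{Q}_{hh}$ is a nonnegative principal submatrix of the Schur stable matrix $Q$, so $I-\check{Q}_{hh}$ is invertible. Inequalities between vectors are entrywise. *)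

From mathcomp Require Import all_boot all_order all_algebra.
Set Implicit Arguments. Unset Strict Implicit. Unset Printing Implicit Defensive.
Import Order.TTheory GRing.Theory Num.Theory.
Local Open Scope ring_scope.

Definition nout (n : nat) (E : rel 'I_n) (j : 'I_n) : nat := #|[set i | E j i]|.

Definition hyperlink (R : fieldType) (n : nat) (E : rel 'I_n) : 'M[R]_n :=
  \matrix_(i, j) (if E j i then (nout E j)%:R^-1 else 0).

(* Entry (a,b) of a matrix, indexed by natural numbers (0-based);
   0 outside the range. *)
Definition getM (R : nmodType) (p q : nat) (M : 'M[R]_(p, q)) (a b : nat) : R :=
  match insub a, insub b with
  | Some a', Some b' => M a' b'
  | _, _ => 0
  end.

(* Offset of group h: l_0 + ... + l_{h-1} (0-based group indices). *)
Definition offs (N : nat) (l : 'I_N -> nat) (h : 'I_N) : nat :=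
  (\sum_(g < N | (g < h)%N) l g)%N.

Definition blkM (R : nmodType) (n N : nat) (l : 'I_N -> nat) (M : 'M[R]_n)
  (h g : 'I_N) : 'M[R]_(l h, l g) :=
  \matrix_(i, j) getM M (offs l h + i) (offs l g + j).

Definition blkV (R : nmodType) (n N : nat) (l : 'I_N -> nat) (x : 'cV[R]_n)
  (h : 'I_N) : 'cV[R]_(l h) :=
  \matrix_(i, j) getM x (offs l h + i) 0.

From mathcomp Require Import all_boot all_order all_algebra.
From mathcomp Require Import lra zify.
Set Implicit Arguments. Unset Strict Implicit. Unset Printing Implicit Defensive.
Import Order.TTheory GRing.Theory Num.Theory.
Local Open Scope ring_scope.

(* With [u_k := (I - Q_pp)^-1 z_p(k)] (p = psi k) and [U_k] the vector carrying
   [u_k] in block p, the two block recursions are the full-vector recursions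
   [x(k+1) = x(k) + Q U_k] and [z(k+1) = z(k) + Q U_k - U_k]: block p of z is
   zeroed exactly because [(I - Q_pp) u_k = z_p(k)].  Induction then gives the
   residual identity [(I - Q)(x* - x(k)) = Q z(k)].  Since Q and its principal
   blocks are nonnegative with column sums at most [1 - m < 1], [(I - B) v >= 0]
   forces [v >= 0]; hence inductively [u_k, U_k, z(k) >= 0], so that
   [x(k+1) - x(k) = Q U_k >= 0] and [x* - x(k) >= 0]. *)

Section NonnegMatrix.
Variable R : numDomainType.

Definition nonneg_mx p q (M : 'M[R]_(p, q)) := forall i j, 0 <= M i j.

Definition substochastic p (c : R) (B : 'M[R]_p) :=
  nonneg_mx B /\ forall j, \sum_i B i j <= c.

Lemma nonneg_const_mx p q (a : R) : 0 <= a -> nonneg_mx (const_mx a : 'M_(p, q)).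
Proof. by move=> a_ge0 i j; rewrite mxE. Qed.

Lemma nonneg_addmx p q (A B : 'M[R]_(p, q)) :
  nonneg_mx A -> nonneg_mx B -> nonneg_mx (A + B).
Proof. by move=> A0 B0 i j; rewrite mxE addr_ge0. Qed.

Lemma nonneg_mulmx p q r (A : 'M[R]_(p, q)) (B : 'M[R]_(q, r)) :
  nonneg_mx A -> nonneg_mx B -> nonneg_mx (A *m B).
Proof. by move=> A0 B0 i j; rewrite mxE sumr_ge0 // => k _; rewrite mulr_ge0. Qed.

Lemma substochasticZ p (a c : R) (B : 'M[R]_p) :
  0 <= a -> substochastic c B -> substochastic (a * c) (a *: B).
Proof.
move=> a_ge0 [B0 Bcol]; split=> [i j|j]; first by rewrite mxE mulr_ge0.
by under eq_bigr do rewrite mxE; rewrite -mulr_sumr ler_wpM2l.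
Qed.

End NonnegMatrix.

Section Substochastic.
Variables (R : realFieldType) (p : nat) (c : R) (B : 'M[R]_p).
Hypotheses (B_sub : substochastic c B) (c_lt1 : c < 1).

(* The negative part [w := min(v, 0)] satisfies [w <= B w]; summing and using
   the column sums, [sum w <= c * sum w], which forces [sum w = 0]. *)
Lemma nonneg_of_1subB_mul (v : 'cV[R]_p) :
  nonneg_mx ((1%:M - B) *m v) -> nonneg_mx v.
Proof.
case: B_sub => B0 Bcol res_ge0.
pose w i := Order.min (v i 0) 0.
have w_le0 i : w i <= 0 by rewrite ge_min lexx orbT.
have w_sub i : \sum_j B i j * w j <= w i.
  have := res_ge0 i 0; rewrite mulmxBl mul1mx !mxE => vi.
  have Bw_le_Bv : \sum_j B i j * w j <= \sum_j B i j * v j 0.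
    by apply: ler_sum => j _; rewrite ler_wpM2l // ge_min lexx.
  have Bw_le0 : \sum_j B i j * w j <= 0.
    by apply: sumr_le0 => j _; rewrite mulr_ge0_le0.
  rewrite le_min Bw_le0 andbT; lra.
pose s := \sum_i w i.
have BwS : \sum_i \sum_j B i j * w j <= s by apply: ler_sum => i _.
have cS : c * s <= \sum_i \sum_j B i j * w j.
  rewrite exchange_big /s mulr_sumr; apply: ler_sum => j _.
  rewrite -mulr_suml; have := Bcol j; have := w_le0 j; nra.
have s_ge0 : 0 <= s.
  have c1_gt0 : 0 < 1 - c by rewrite subr_gt0.
  by rewrite -(pmulr_rge0 s c1_gt0); lra.
move=> i j; rewrite (ord1 j).
suff : 0 <= w i by rewrite le_min lexx andbT.
move: s_ge0; rewrite /s (bigD1 i) //=.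
have : \sum_(j | j != i) w j <= 0 by apply: sumr_le0.
lra.
Qed.

Lemma unitmx_1subB : (1%:M - B) \in unitmx.
Proof.
rewrite -unitmx_tr -row_free_unit; apply/inj_row_free => v Bv0.
have Bv0T : (1%:M - B) *m v^T = 0 by rewrite -[1%:M - B]trmxK -trmx_mul Bv0 trmx0.
have v_ge0 := @nonneg_of_1subB_mul v^T.
have v_le0 := @nonneg_of_1subB_mul (- v^T).
rewrite mulmxN Bv0T oppr0 in v_le0; rewrite Bv0T in v_ge0.
apply/rowP => j; apply/eqP; rewrite eq_le.
have := v_ge0 (nonneg_const_mx (lexx 0)) j 0.
have := v_le0 (nonneg_const_mx (lexx 0)) j 0.
rewrite !mxE; lra.
Qed.

Lemma nonneg_invmx_1subB_mul (v : 'cV[R]_p) :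
  nonneg_mx v -> nonneg_mx (invmx (1%:M - B) *m v).
Proof.
by move=> v0; apply: nonneg_of_1subB_mul; rewrite mulmxA mulmxV ?mul1mx // unitmx_1subB.
Qed.

End Substochastic.

Lemma hyperlink_substochastic (R : numFieldType) (n : nat) (E : rel 'I_n) :
  (forall j, exists i, E j i) -> substochastic 1 (hyperlink R E).
Proof.
move=> Eout; split=> [i j|j]; first by rewrite mxE; case: ifP; rewrite ?invr_ge0.
have nout_gt0 : (0 < nout E j)%N.
  by have [i Eji] := Eout j; apply/card_gt0P; exists i; rewrite inE.
suff -> : \sum_i hyperlink R E i j = 1 by [].
under eq_bigr do rewrite mxE.
rewrite -big_mkcond /= sumr_const.
have -> : #|E j| = nout E j by apply: eq_card => i; rewrite inE.
by rewrite -[LHS]mulr_natr mulVf // pnatr_eq0 -lt0n.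
Qed.

Section ConsecutivePartition.
Variables (N : nat) (l : 'I_N -> nat).
Local Open Scope nat_scope.
Local Notation offs := (offs l).

Lemma big_ord_ltnS T (idx : T) (op : Monoid.com_law idx) (h : 'I_N) (G : 'I_N -> T) :
  \big[op/idx]_(g < N | g < h.+1) G g = op (\big[op/idx]_(g < N | g < h) G g) (G h).
Proof.
rewrite (bigD1 h) //= Monoid.mulmC; congr (op _ _); apply: eq_bigl => g.
by rewrite ltnS andbC -ltn_neqAle.
Qed.

Lemma offsS (h : 'I_N) : \sum_(g < N | g < h.+1) l g = offs h + l h.
Proof. exact: big_ord_ltnS. Qed.

Lemma offs_add_le_sum (h : 'I_N) : offs h + l h <= \sum_(g < N) l g.
Proof. by rewrite -offsS; apply: (sub_le_big leqnn (fun x y => leq_addr y x)). Qed.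

Lemma offs_add_le_offs (h g : 'I_N) : h < g -> offs h + l h <= offs g.
Proof.
move=> hg; rewrite -offsS; apply: (sub_le_big leqnn (fun x y => leq_addr y x)).
by move=> g'; rewrite ltnS => /leq_ltn_trans; apply.
Qed.

Lemma offs_inj (g h : 'I_N) (i j : nat) :
  i < l g -> j < l h -> offs g + i = offs h + j -> g = h.
Proof.
move=> ig jh eq_gh.
by case: (ltngtP g h) => [lt|lt|/val_inj //]; have := offs_add_le_offs lt; lia.
Qed.

Lemma big_blocks T (idx : T) (op : Monoid.com_law idx) (F : nat -> T) :
  \big[op/idx]_(a < \sum_(g < N) l g) F a =
  \big[op/idx]_(g < N) \big[op/idx]_(i < l g) F (offs g + i).
Proof.
suff blocks t : t <= N ->
    \big[op/idx]_(a < \sum_(g < N | g < t) l g) F a =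
    \big[op/idx]_(g < N | g < t) \big[op/idx]_(i < l g) F (offs g + i).
  by have := blocks N (leqnn N); rewrite !(eq_bigl xpredT _ (@ltn_ord N)).
elim: t => [|t IH] tN.
  by rewrite !(eq_bigl xpred0 _ (fun g : 'I_N => ltn0 g)) !big_pred0_eq big_ord0.
rewrite (offsS (Ordinal tN)) (big_ord_ltnS _ (Ordinal tN)).
by rewrite -IH ?big_split_ord //; apply: ltnW.
Qed.

Lemma offs_cover (a : nat) : a < \sum_(g < N) l g ->
  exists g (i : 'I_(l g)), a = offs g + i.
Proof.
move=> a_lt; have : \big[orb/false]_(b < \sum_(g < N) l g) (b == a :> nat).
  by rewrite big_orE; apply/existsP; exists (Ordinal a_lt) => /=.
rewrite (big_blocks _ (fun b => b == a)) big_orE => /existsP[g].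
by rewrite big_orE => /existsP[i /eqP <-]; exists g, i.
Qed.

End ConsecutivePartition.

Section Entries.
Variable R : nmodType.

Lemma getM_ord p q (M : 'M[R]_(p, q)) (i : 'I_p) (j : 'I_q) : getM M i j = M i j.
Proof. by rewrite /getM !valK. Qed.

Lemma getM_col p (v : 'cV[R]_p) (i : 'I_p) : getM v i 0 = v i 0.
Proof. exact: (getM_ord v i 0). Qed.

Lemma getM_oob p q (M : 'M[R]_(p, q)) a b : (p <= a)%N -> getM M a b = 0.
Proof. by move=> pa; rewrite /getM insubF // ltnNge pa. Qed.

Lemma getMD p q (M M' : 'M[R]_(p, q)) a b : getM (M + M') a b = getM M a b + getM M' a b.
Proof.
by rewrite /getM; case: insub => [i|]; [case: insub => [j|] | ]; rewrite ?mxE ?addr0.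
Qed.

End Entries.

Lemma getMN (R : zmodType) p q (M : 'M[R]_(p, q)) a b : getM (- M) a b = - getM M a b.
Proof.
by rewrite /getM; case: insub => [i|]; [case: insub => [j|] | ]; rewrite ?mxE ?oppr0.
Qed.

Section Blocks.
Variables (R : pzRingType) (n N : nat) (l : 'I_N -> nat).
Hypothesis sum_l : (\sum_(h < N) l h)%N = n.
Local Notation blkV := (@blkV R n N l).
Local Notation blkM := (@blkM R n N l).

Lemma offs_add_lt (h : 'I_N) (i : 'I_(l h)) : (offs l h + i < n)%N.
Proof. by rewrite -sum_l; apply: leq_trans (offs_add_le_sum l h); rewrite ltn_add2l. Qed.

Lemma blkVE (v : 'cV[R]_n) h (i : 'I_(l h)) j :
  blkV v h i j = v (Ordinal (offs_add_lt i)) 0.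
Proof. by rewrite mxE -[(offs l h + i)%N]/(nat_of_ord (Ordinal (offs_add_lt i))) getM_col. Qed.

Lemma blkV_cover (a : 'I_n) :
  exists h (i : 'I_(l h)), forall v : 'cV[R]_n, blkV v h i 0 = v a 0.
Proof.
have [h [i a_eq]] : exists h (i : 'I_(l h)), nat_of_ord a = (offs l h + i)%N.
  by apply: offs_cover; rewrite sum_l.
by exists h, i => v; rewrite mxE -a_eq getM_col.
Qed.

Lemma blkV_inj (v w : 'cV[R]_n) : (forall h, blkV v h = blkV w h) -> v = w.
Proof.
move=> eq_vw; apply/colP => a; have [h [i blkE]] := blkV_cover a.
by rewrite -!blkE eq_vw.
Qed.

Lemma blkVD (v w : 'cV[R]_n) h : blkV (v + w) h = blkV v h + blkV w h.
Proof. by apply/matrixP => i j; rewrite !mxE getMD. Qed.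

Lemma blkVN (v : 'cV[R]_n) h : blkV (- v) h = - blkV v h.
Proof. by apply/matrixP => i j; rewrite !mxE getMN. Qed.

Lemma blkV_const (a : R) h : blkV (const_mx a) h = const_mx a.
Proof. by apply/matrixP => i j; rewrite blkVE !mxE. Qed.

Lemma blkV_mulmx (M : 'M[R]_n) (v : 'cV[R]_n) h :
  blkV (M *m v) h = \sum_g blkM M h g *m blkV v g.
Proof.
apply/matrixP => i j; rewrite blkVE summxE mxE.
set a := Ordinal _.
have -> : \sum_b M a b * v b 0 = \sum_(b < n) getM M a b * getM v b 0.
  by apply: eq_bigr => b _; rewrite getM_ord getM_col.
have := big_blocks l +%R (fun b => getM M a b * getM v b 0); rewrite sum_l => ->.
by apply: eq_bigr => g _; rewrite !mxE; apply: eq_bigr => k _; rewrite !mxE.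
Qed.

(* [getM] is [0] past the end of [u], so [embedV u] vanishes outside block [g]. *)
Definition embedV (g : 'I_N) (u : 'cV[R]_(l g)) : 'cV[R]_n :=
  \col_a (if (offs l g <= a)%N then getM u (a - offs l g) 0 else 0).

Lemma blkV_embedV g (u : 'cV[R]_(l g)) : blkV (embedV u) g = u.
Proof.
apply/matrixP => i j; rewrite blkVE mxE (ord1 j) /=.
by rewrite leq_addr addKn getM_col.
Qed.

Lemma blkV_embedV_neq g h (u : 'cV[R]_(l g)) : h != g -> blkV (embedV u) h = 0.
Proof.
move=> hg; apply/matrixP => i j; rewrite blkVE !mxE /=.
case: leqP => // le_gh; apply: getM_oob; rewrite leqNgt; apply/negP => lt_g.
by move/eqP: hg; apply; apply: (offs_inj (ltn_ord i) lt_g); rewrite subnKC.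
Qed.

Lemma blkV_mul_embedV (M : 'M[R]_n) g h (u : 'cV[R]_(l g)) :
  blkV (M *m embedV u) h = blkM M h g *m u.
Proof.
rewrite blkV_mulmx (bigD1 g) //= blkV_embedV big1 ?addr0 // => g' g'g.
by rewrite blkV_embedV_neq ?mulmx0.
Qed.

Lemma blkV_step (M : 'M[R]_n) g (u : 'cV[R]_(l g)) (x x' : 'cV[R]_n) :
    (forall h, blkV x' h = blkV x h + blkM M h g *m u) ->
  x' = x + M *m embedV u.
Proof. by move=> x'E; apply: blkV_inj => h; rewrite blkVD blkV_mul_embedV x'E. Qed.

Lemma blkV_residual_step (M : 'M[R]_n) g (u : 'cV[R]_(l g)) (z z' : 'cV[R]_n) :
    (1%:M - blkM M g g) *m u = blkV z g ->
    (forall h, blkV z' h = if h == g then 0 else blkV z h + blkM M h g *m u) ->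
  z' = z + M *m embedV u - embedV u.
Proof.
move=> uE z'E; apply: blkV_inj => h; rewrite z'E !blkVD blkVN blkV_mul_embedV.
case: eqVneq => [->|hg]; last by rewrite blkV_embedV_neq // oppr0 addr0.
by rewrite blkV_embedV -uE mulmxBl mul1mx subrK subrr.
Qed.

End Blocks.

Section NonnegBlocks.
Variables (R : numDomainType) (n N : nat) (l : 'I_N -> nat).
Hypothesis sum_l : (\sum_(h < N) l h)%N = n.
Local Notation blkV := (@blkV R n N l).
Local Notation blkM := (@blkM R n N l).

Lemma getM_ge0 p q (M : 'M[R]_(p, q)) a b : nonneg_mx M -> 0 <= getM M a b.
Proof. by move=> M0; rewrite /getM; case: insub => [i|//]; case: insub. Qed.

Lemma nonneg_blkV (v : 'cV[R]_n) h : nonneg_mx v -> nonneg_mx (blkV v h).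
Proof. by move=> v0 i j; rewrite mxE getM_ge0. Qed.

Lemma nonneg_blkM (M : 'M[R]_n) h g : nonneg_mx M -> nonneg_mx (blkM M h g).
Proof. by move=> M0 i j; rewrite mxE getM_ge0. Qed.

Lemma nonneg_of_blkV (v : 'cV[R]_n) : (forall h, nonneg_mx (blkV v h)) -> nonneg_mx v.
Proof.
move=> blk0 a j; rewrite (ord1 j); have [h [i <-]] := blkV_cover R sum_l a.
exact: blk0.
Qed.

Lemma nonneg_embedV g (u : 'cV[R]_(l g)) : nonneg_mx u -> nonneg_mx (embedV n u).
Proof. by move=> u0 a j; rewrite mxE; case: ifP => // _; rewrite getM_ge0. Qed.

Lemma substochastic_blkM (c : R) (M : 'M[R]_n) h :
  substochastic c M -> substochastic c (blkM M h h).
Proof.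
case=> M0 Mcol; split=> [|j]; first exact: nonneg_blkM.
set b := Ordinal (offs_add_lt sum_l j); apply: le_trans (Mcol b).
have -> : \sum_a M a b = \sum_(a < n) getM M a b by apply: eq_bigr => a _; rewrite getM_ord.
have := big_blocks l +%R (fun a => getM M a b); rewrite sum_l => ->.
under eq_bigr do rewrite mxE.
rewrite (bigD1 h) //= lerDl sumr_ge0 // => g _; rewrite sumr_ge0 // => i _.
exact: getM_ge0.
Qed.

Lemma nonneg_blkV_residual_step (M : 'M[R]_n) g (u : 'cV[R]_(l g)) (z z' : 'cV[R]_n) :
    nonneg_mx M -> nonneg_mx u -> nonneg_mx z ->
    (forall h, blkV z' h = if h == g then 0 else blkV z h + blkM M h g *m u) ->
  nonneg_mx z'.
Proof.
move=> M0 u0 z0 z'E; apply: nonneg_of_blkV => h; rewrite z'E.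
case: eqP => _; first by move=> i j; rewrite mxE.
by apply: nonneg_addmx; [exact: nonneg_blkV | exact/nonneg_mulmx/u0/nonneg_blkM].
Qed.

End NonnegBlocks.

Section ResidualIteration.
Variables (R : realFieldType) (n : nat) (c : R) (Q : 'M[R]_n) (b xstar : 'cV[R]_n).
Hypotheses (Q_sub : substochastic c Q) (c_lt1 : c < 1).
Hypothesis xstar_fix : xstar = Q *m xstar + b.
Variables (x z U : nat -> 'cV[R]_n).
Hypotheses (x0 : x 0%N = b) (z0 : z 0%N = b).
Hypothesis x_step : forall k, x k.+1 = x k + Q *m U k.
Hypothesis z_step : forall k, z k.+1 = z k + Q *m U k - U k.

Lemma residual_eq k : (1%:M - Q) *m (xstar - x k) = Q *m z k.
Proof.
elim: k => [|k IH].
  have fixE : (1%:M - Q) *m xstar = b.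
    by rewrite mulmxBl mul1mx {1}xstar_fix addrAC subrr add0r.
  by rewrite x0 z0 mulmxBr fixE mulmxBl mul1mx opprB addrC subrK.
rewrite x_step z_step opprD addrA mulmxBr IH !mulmxDr mulmxN mulmxBl mul1mx.
by rewrite mulmxA opprB addrA.
Qed.

Lemma iterate_le_fix k : nonneg_mx (z k) -> forall i, x k i 0 <= xstar i 0.
Proof.
move=> z_ge0 i; have := nonneg_of_1subB_mul Q_sub c_lt1 (v := xstar - x k).
rewrite residual_eq => /(_ (nonneg_mulmx Q_sub.1 z_ge0) i 0).
by rewrite !mxE subr_ge0.
Qed.

Lemma iterate_le_succ k : nonneg_mx (U k) -> forall i, x k i 0 <= x k.+1 i 0.
Proof. by move=> U_ge0 i; rewrite x_step mxE lerDl (nonneg_mulmx Q_sub.1). Qed.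

End ResidualIteration.

Theorem lemma4 (R : realFieldType) (n : nat) (E : rel 'I_n) (m : R)
  (xstar : 'cV[R]_n) (N : nat) (l : 'I_N -> nat) (psi : nat -> 'I_N)
  (x z : nat -> 'cV[R]_n) :
  (2 <= n)%N ->
  (forall j : 'I_n, exists i : 'I_n, E j i) ->
  0 < m < 1 ->
  xstar = (1 - m) *: hyperlink R E *m xstar + const_mx (m / n%:R) ->
  \sum_(i < n) xstar i 0 = 1 ->
  (1 <= N <= n)%N ->
  (forall h, 0 < l h)%N ->
  (\sum_(h < N) l h)%N = n ->
  let Q := (1 - m) *: hyperlink R E in
  (forall h, blkV l (x 0%N) h = const_mx (m / n%:R)) ->
  (forall h, blkV l (z 0%N) h = const_mx (m / n%:R)) ->
  (forall k h, blkV l (x k.+1) h =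
     blkV l (x k) h + blkM l Q h (psi k)
       *m invmx (1%:M - blkM l Q (psi k) (psi k)) *m blkV l (z k) (psi k)) ->
  (forall k h, blkV l (z k.+1) h =
     if h == psi k then 0
     else blkV l (z k) h + blkM l Q h (psi k)
       *m invmx (1%:M - blkM l Q (psi k) (psi k)) *m blkV l (z k) (psi k)) ->
  forall (k : nat) (i : 'I_n),
    x k i 0 <= x k.+1 i 0 /\ x k.+1 i 0 <= xstar i 0.
Proof.
move=> _ Eout /andP[m_gt0 m_lt1] xstar_fix _ _ _ sum_l Q x0 z0 x_step z_step.
have Q_sub : substochastic (1 - m) Q.
  have := substochasticZ (a := 1 - m) _ (hyperlink_substochastic R Eout).
  rewrite mulr1; apply; lra.
have c_lt1 : 1 - m < 1 by lra.
have Qhh_sub h : substochastic (1 - m) (blkM l Q h h) := substochastic_blkM sum_l h Q_sub.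
have [x0E z0E] : x 0%N = const_mx (m / n%:R) /\ z 0%N = const_mx (m / n%:R).
  by split; apply: (blkV_inj sum_l) => h; rewrite blkV_const.
pose u k := invmx (1%:M - blkM l Q (psi k) (psi k)) *m blkV l (z k) (psi k).
have uE k : (1%:M - blkM l Q (psi k) (psi k)) *m u k = blkV l (z k) (psi k).
  by rewrite mulmxA mulmxV ?mul1mx // (unitmx_1subB (Qhh_sub _) c_lt1).
pose U k := embedV n (u k).
have x_full k : x k.+1 = x k + Q *m U k.
  by apply: (blkV_step sum_l) => h; rewrite x_step -mulmxA.
have z_full k : z k.+1 = z k + Q *m U k - U k.
  by apply: (blkV_residual_step sum_l (uE k)) => h; rewrite z_step -mulmxA.
have u_ge0 k : nonneg_mx (z k) -> nonneg_mx (u k).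
  by move=> zk_ge0; exact: (nonneg_invmx_1subB_mul (Qhh_sub _) c_lt1 (nonneg_blkV zk_ge0)).
have z_ge0 k : nonneg_mx (z k).
  elim: k => [|k IH].
    by rewrite z0E; apply/nonneg_const_mx/divr_ge0; [exact: ltW | exact: ler0n].
  apply: (nonneg_blkV_residual_step sum_l Q_sub.1 (u_ge0 k IH) IH) => h.
  by rewrite z_step -mulmxA.
move=> k i; split.
  exact: (iterate_le_succ Q_sub x_full (nonneg_embedV (u_ge0 k (z_ge0 k)))).
exact: (iterate_le_fix Q_sub c_lt1 xstar_fix x0E z0E x_full z_full (z_ge0 _)).
Qed.
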